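(* Let $\mathbb V$ be a Schubert representation of $\widehat H_n$ with generic Schubert classes $\{\mathcal Y_w\}_{w\in S_n}$, evaluation map $\operatorname{ev}$ and equivariant parameters $t_1,\dots,t_n$. Let $w\in S_n$ and $f\in\mathcal A_\hbar[x_1,\dots,x_n]$, and suppose that in $\widehat H_n$ $$\overline T_wf=\sum_{u\in S_n}P_{u,w}(x_1,\dots,x_n)\,\overline T_u,\qquad P_{u,w}\in\mathcal A_\hbar[x_1,\dots,x_n].$$ Then for each $u\in S_n$, $f\cdot\mathcal Y_u=\sum_{w\in S_n}P_{u,w}(t_1,\dots,t_n)\,\mathcal Y_w$ in $\mathbb V$.
   Context: $\mathcal A=\mathbb Q[p,q]$, $\mathcal A_\hbar=\mathcal A[\hbar]$. The affine Hecke algebra $\widehat H_n$ over $\mathcal A_\hbar$ is generated by $T_1,\dots,T_{n-1}$ and $x_1,\dots,x_n$ subject to: $(T_i+p)(T_i-q)=0$; $T_iT_j=T_jT_i$ for $|i-j|>1$; $T_iT_{i+1}T_i=T_{i+1}T_iT_{i+1}$; $x_ix_j=x_jx_i$; $T_ix_j=x_jT_i$ for $j\ne i,i+1$; $T_ix_i=x_{i+1}T_i+(\hbar-(p-q)x_i)$; $T_ix_{i+1}=x_iT_i-(\hbar-(p-q)x_i)$. For $w\in S_n$ with reduced word $w=s_{i_1}\cdots s_{i_\ell}$, $T_w=T_{i_1}\cdots T_{i_\ell}$; $\overline T_i=T_i+p-q$ and $\overline T_w=\overline T_{i_1}\cdots\overline T_{i_\ell}$ (well defined). The elements $x^\alpha\overline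 T_w$ form an $\mathcal A_\hbar$-basis of $\widehat H_n$. A Schubert representation: a field $\mathbb F$ with elements $t_1,\dots,t_n\in\mathbb F$ (equivariant parameters), a ring map $\mathcal A_\hbar\to\mathbb F$ (images still written $p,q,\hbar$), and an $\mathbb F$-vector space $\mathbb V$ with an action of $\widehat H_n$ in which $\mathcal A_\hbar$ acts by these scalars, together with a distinguished $\mathcal Y_{w_0}\in\mathbb V$ ($w_0$ the longest element of $S_n$) such that $\mathcal Y_w:=T_{w^{-1}w_0}\cdot\mathcal Y_{w_0}$ ($w\in S_n$) form an $\mathbb F$-basis of $\mathbb V$, and an $\mathbb F$-linear map $\operatorname{ev}\colon\mathbb V\to\mathbb F$ with $\operatorname{ev}(\mathcal Y_w)\ne0\iff w=\mathrm{id}$ and $\operatorname{ev}(x_i\cdot\mathcal Y_w)=t_i\operatorname{ev}(\mathcal Y_w)$ for all $i,w$. $P(t_1,\dots,t_n)$ denotes the image of $P$ in $\mathbb F$ under $x_i\mapsto t_i$. *)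

From HB Require Import structures.
From mathcomp Require Import all_boot all_order all_algebra all_fingroup.
From mathcomp Require Import all_field.
From mathcomp Require Import mpoly.
Set Implicit Arguments. Unset Strict Implicit. Unset Printing Implicit Defensive.
Import GRing.Theory.
Local Open Scope ring_scope.

Definition Ah : Type := {mpoly rat[3]}.
Definition pA : Ah := 'X_(@inord 2 0).
Definition qA : Ah := 'X_(@inord 2 1).
Definition hA : Ah := 'X_(@inord 2 2).

(* Generators are 0-based: s_i (i.+1 < n) swaps i and i.+1
   (paper's s_{i+1}).  Group law = composition of functions:
   compS a b = a o b  (MathComp's  b * a, since (b*a) x = a (b x)). *)
Definition compS n (a b : 'S_n) : 'S_n := (b * a)%g.

Definition sadj n (i : nat) : 'S_n :=
  match (insub i : option 'I_n), (insub i.+1 : option 'I_n) with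
  | Some a, Some b => tperm a b
  | _, _ => 1%g
  end.

Definition valid_word n (ws : seq nat) : bool := all (fun i => i.+1 < n)%N ws.

Definition word_perm n (ws : seq nat) : 'S_n :=
  foldr (fun i acc => compS (sadj n i) acc) 1%g ws.

Definition reduced_word_of n (ws : seq nat) (w : 'S_n) : Prop :=
  [/\ valid_word n ws, word_perm n ws = w &
      forall ws', valid_word n ws' -> word_perm n ws' = w -> (size ws <= size ws')%N].

Definition w0 n : 'S_n := perm (@rev_ord_inj n).

Definition hecke_rel n (R : ringType) (c : Ah -> R) (T x : nat -> R) : Prop :=
  let p := c pA in let q := c qA in let h := c hA in
  (forall i, (i.+1 < n)%N -> (T i + p) * (T i - q) = 0) /\
      (forall i j, (i.+1 < n)%N -> (j.+1 < n)%N -> (i.+1 < j)%N || (j.+1 < i)%N ->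
                  T i * T j = T j * T i) /\
      (forall i, (i.+2 < n)%N -> T i * T i.+1 * T i = T i.+1 * T i * T i.+1) /\
      (forall i j, (i < n)%N -> (j < n)%N -> x i * x j = x j * x i) /\
      (forall i j, (i.+1 < n)%N -> (j < n)%N -> j != i -> j != i.+1 ->
                  T i * x j = x j * T i) /\
      (forall i, (i.+1 < n)%N -> T i * x i = x i.+1 * T i + (h - (p - q) * x i)) /\
      (forall i, (i.+1 < n)%N -> T i * x i.+1 = x i * T i - (h - (p - q) * x i)).

Definition peval n (R : ringType) (c : Ah -> R) (x : nat -> R)
    (F : {mpoly Ah[n]}) : R :=
  \sum_(m <- msupp F) c F@_m * \prod_(i < n) x i ^+ m i.

Definition Tbar_word (R : ringType) (c : Ah -> R) (T : nat -> R) (ws : seq nat) : R :=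
  \prod_(i <- ws) (T i + (c pA - c qA)).

(* An identity  a = b  between words in the generators holds in \hat H_n
   iff it holds in every A_hbar-algebra R under every assignment of the
   generators satisfying the defining relations (universal property of
   the presented algebra). *)
Definition hecke_identity n (rw : 'S_n -> seq nat) (f : {mpoly Ah[n]})
    (P : 'S_n -> 'S_n -> {mpoly Ah[n]}) (w : 'S_n) : Prop :=
  forall (R : ringType) (c : {rmorphism Ah -> R}) (T x : nat -> R),
    (forall (a : Ah) (r : R), c a * r = r * c a) ->
    hecke_rel n c T x ->
    Tbar_word c T (rw w) * peval c x f =
      \sum_(u : 'S_n) peval c x (P u w) * Tbar_word c T (rw u).

Section Action.
Variables (F : fieldType) (V : vectType F).

Definition hecke_action n (phi : Ah -> F) (T x : nat -> {linear V -> V}) : Prop :=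
  let p := phi pA in let q := phi qA in let h := phi hA in
  (forall i v, (i.+1 < n)%N -> T i (T i v - q *: v) + p *: (T i v - q *: v) = 0) /\
      (forall i j v, (i.+1 < n)%N -> (j.+1 < n)%N -> (i.+1 < j)%N || (j.+1 < i)%N ->
                  T i (T j v) = T j (T i v)) /\
      (forall i v, (i.+2 < n)%N -> T i (T i.+1 (T i v)) = T i.+1 (T i (T i.+1 v))) /\
      (forall i j v, (i < n)%N -> (j < n)%N -> x i (x j v) = x j (x i v)) /\
      (forall i j v, (i.+1 < n)%N -> (j < n)%N -> j != i -> j != i.+1 ->
                  T i (x j v) = x j (T i v)) /\
      (forall i v, (i.+1 < n)%N ->
                  T i (x i v) = x i.+1 (T i v) + (h *: v - (p - q) *: x i v)) /\
      (forall i v, (i.+1 < n)%N ->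
                  T i (x i.+1 v) = x i (T i v) - (h *: v - (p - q) *: x i v)).

Definition apply_word (T : nat -> {linear V -> V}) (ws : seq nat) (v : V) : V :=
  foldr (fun i u => T i u) v ws.

Definition xmon_act n (x : nat -> {linear V -> V}) (m : 'X_{1..n}) (v : V) : V :=
  foldr (fun i u => iter (m i) (x (nat_of_ord i)) u) v (enum 'I_n).

Definition poly_act n (phi : Ah -> F) (x : nat -> {linear V -> V})
    (G : {mpoly Ah[n]}) (v : V) : V :=
  \sum_(m <- msupp G) phi G@_m *: xmon_act x m v.

End Action.

(* Put lambda_w := ev o Tbar_w.  By the quadratic relation, Tbar_i Y_b is Y_(b s_i) + (p - q) Y_b
   when i is a descent of b and p q Y_(b s_i) otherwise; this uses Matsumoto's theorem, that
   T_(w) does not depend on the chosen reduced word, to move s_i in and out of the word defining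
   Y_b.  Since ev kills every Schubert class except Y_1, induction along a reduced word of w gives
   lambda_w (Y_b) = [w = b] ev (Y_1): the lambda_w form a family dual to the Schubert basis.
   Applying lambda_w to f Y_u and expanding Tbar_w f = sum_v P_(v,w)(x) Tbar_v, where ev turns
   x_i into t_i, yields P_(u,w)(t) ev (Y_1), which is also lambda_w of the right-hand side. *)

From HB Require Import structures.
From mathcomp Require Import all_boot all_order all_algebra all_fingroup.
From mathcomp Require Import all_field.
From mathcomp Require Import mpoly.
From mathcomp Require Import zify.
Set Implicit Arguments. Unset Strict Implicit. Unset Printing Implicit Defensive.
Import GRing.Theory.

(* Decides each atomic test [a == b] of nested [if]s by [lia] when the context settles it,
   splits on it otherwise, and finishes with [lia]. *)
Local Ltac case_eqn := repeat match goal with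
  | |- context [?a == ?b] => lazymatch a with
       | context [if _ then _ else _] => fail
       | _ => first [ have -> : (a == b) = true by apply/eqP; lia
                    | have -> : (a == b) = false by apply/negbTE/eqP; lia
                    | case: (@eqP _ a b) => ? ] => /=
       end
  end; lia.

Definition swapn (i k : nat) : nat :=
  if k == i then i.+1 else if k == i.+1 then i else k.

Lemma swapnl i : swapn i i = i.+1.
Proof. by rewrite /swapn eqxx. Qed.

Lemma swapnr i : swapn i i.+1 = i.
Proof. by rewrite /swapn gtn_eqF // eqxx. Qed.

Lemma swapn_id i k : k != i -> k != i.+1 -> swapn i k = k.
Proof. by rewrite /swapn => /negPf-> /negPf->. Qed.

Lemma swapn_ltn i k l : ~~ ((k == i) && (l == i.+1)) -> ~~ ((k == i.+1) && (l == i)) ->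
  (swapn i k < swapn i l) = (k < l).
Proof. rewrite /swapn; case_eqn. Qed.

Lemma swapnC i j k : (i.+1 < j) || (j.+1 < i) -> swapn i (swapn j k) = swapn j (swapn i k).
Proof. rewrite /swapn; case_eqn. Qed.

Lemma swapn_braid i k :
  swapn i (swapn i.+1 (swapn i k)) = swapn i.+1 (swapn i (swapn i.+1 k)).
Proof. rewrite /swapn; case_eqn. Qed.

Section Permutations.
Variable n : nat.
Implicit Types (a b c w : 'S_n) (ws : seq nat).

Lemma compSE a b k : compS a b k = a (b k).
Proof. exact: permM. Qed.

Lemma compSA a b c : compS a (compS b c) = compS (compS a b) c.
Proof. by rewrite /compS mulgA. Qed.

Lemma comp1S a : compS 1 a = a.
Proof. exact: mulg1. Qed.

Lemma compS1 a : compS a 1 = a.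
Proof. exact: mul1g. Qed.

Lemma sadjE i (k : 'I_n) : i.+1 < n -> sadj n i k = swapn i k :> nat.
Proof.
move=> hi; rewrite /sadj; case: insubP => [a _ va|/negP[]]; last exact: ltnW.
case: insubP => [b _ vb|/negP[]//].
case: tpermP => [->|->|hka hkb]; rewrite ?va ?vb ?swapnl ?swapnr //.
by rewrite swapn_id //; [rewrite -va | rewrite -vb]; apply/eqP => /ord_inj.
Qed.

Lemma sadjK i : involutive (sadj n i).
Proof.
rewrite /sadj; case: (insub i : option 'I_n) => [a|];
  case: (insub i.+1 : option 'I_n) => [b|] //= k; by rewrite ?tpermK ?perm1.
Qed.

Lemma compS_sadjK a i : compS (compS a (sadj n i)) (sadj n i) = a.
Proof. by apply/permP => k; rewrite !compSE sadjK. Qed.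

Lemma sadjV i : (sadj n i)^-1%g = sadj n i.
Proof. by apply/permP => k; apply: (@perm_inj _ (sadj n i)); rewrite permKV sadjK. Qed.

Lemma compS_sadj_eq a b i : (compS a (sadj n i) == b) = (a == compS b (sadj n i)).
Proof. by apply/eqP/eqP => [<-|->]; rewrite compS_sadjK. Qed.

Lemma sadjC i j k : i.+1 < n -> j.+1 < n -> (i.+1 < j) || (j.+1 < i) ->
  sadj n i (sadj n j k) = sadj n j (sadj n i k).
Proof. by move=> hi hj hij; apply: ord_inj; rewrite !sadjE // swapnC. Qed.

Lemma sadj_braid i k : i.+2 < n ->
  sadj n i (sadj n i.+1 (sadj n i k)) = sadj n i.+1 (sadj n i (sadj n i.+1 k)).
Proof.
move=> hi; have hi1 := ltnW hi.
by apply: ord_inj; rewrite !sadjE // swapn_braid.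
Qed.

Lemma word_perm_rcons ws i : word_perm n (rcons ws i) = compS (word_perm n ws) (sadj n i).
Proof. by elim: ws => [|j ws IH] /=; rewrite ?comp1S ?compS1 // IH compSA. Qed.

Lemma valid_word_rcons ws i : valid_word n (rcons ws i) = valid_word n ws && (i.+1 < n).
Proof. by rewrite /valid_word -cats1 all_cat /= andbT. Qed.

Definition permn w (k : nat) : nat := if insub k is Some x then val (w x) else 0.

Lemma permnE w (k : 'I_n) : permn w k = w k.
Proof. by rewrite /permn valK. Qed.

Lemma permn_inj w k l : k < n -> l < n -> permn w k = permn w l -> k = l.
Proof.
move=> hk hl; rewrite -[k]/(val (Ordinal hk)) -[l]/(val (Ordinal hl)) !permnE.
by move/val_inj/perm_inj->.
Qed.

Lemma permn_sadj w i k : i.+1 < n ->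
  permn (compS w (sadj n i)) k = permn w (swapn i k).
Proof.
move=> hi; have [hk|hk] := ltnP k n.
  by rewrite -[k]/(val (Ordinal hk)) permnE compSE -permnE sadjE.
rewrite swapn_id; try lia.
by rewrite /permn insubN // -leqNgt.
Qed.

Definition descent w i := permn w i.+1 < permn w i.

Lemma descent_sadj w i : i.+1 < n -> descent (compS w (sadj n i)) i = ~~ descent w i.
Proof.
move=> hi; rewrite /descent !permn_sadj // swapnl swapnr -leqNgt [in RHS]leq_eqVlt.
by case: eqP => [/(permn_inj (ltnW hi) hi)|]; first lia.
Qed.

Definition ninv w : nat := \sum_(k : 'I_n) \sum_(l : 'I_n) ((k < l) && (w l < w k)).

Lemma ninv1 : ninv 1 = 0.
Proof.
by rewrite /ninv big1 // => k _; rewrite big1 // => l _; rewrite !perm1; case: ltngtP.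
Qed.

Lemma ninvV w : ninv w^-1 = ninv w.
Proof.
rewrite /ninv [LHS](reindex_inj (@perm_inj _ w)) [RHS]exchange_big /=.
apply: eq_bigr => k _; rewrite [LHS](reindex_inj (@perm_inj _ w)).
by apply: eq_bigr => l _; rewrite !permK andbC.
Qed.

Lemma ninv_mulw0 w : ninv (compS w (w0 n)) + ninv w = ninv (w0 n).
Proof.
suff ninv_pairs w' : ninv (compS w' (w0 n)) + ninv w' = \sum_(k : 'I_n) \sum_(l : 'I_n) (k < l).
  by rewrite ninv_pairs -(ninv_pairs 1%g) ninv1 addn0 comp1S.
have w0K : involutive (w0 n).
  by move=> k; apply: ord_inj; rewrite /w0 !permE /=; have := ltn_ord k; lia.
have ninv_w0 : ninv (compS w' (w0 n)) =
    \sum_(k : 'I_n) \sum_(l : 'I_n) ((k < l) && (w' k < w' l)).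
  rewrite [RHS]exchange_big /ninv (reindex_inj (@perm_inj _ (w0 n))) /=.
  apply: eq_bigr => k _; rewrite (reindex_inj (@perm_inj _ (w0 n))).
  apply: eq_bigr => l _; rewrite !compSE !w0K /w0 !permE /=.
  by congr (_ && _); have := ltn_ord k; have := ltn_ord l; lia.
rewrite ninv_w0 /ninv -big_split /=; apply: eq_bigr => k _.
rewrite -big_split /=; apply: eq_bigr => l _.
case: ltnP => //= kl.
have : w' k != w' l by rewrite (inj_eq perm_inj) neq_ltn kl.
by rewrite neq_ltn; case: ltngtP.
Qed.

Lemma ninv_sadj w i : i.+1 < n -> ~~ descent w i -> ninv (compS w (sadj n i)) = (ninv w).+1.
Proof.
move=> hi asc; set s := sadj n i.
pose oi : 'I_n := Ordinal (ltnW hi); pose oj : 'I_n := Ordinal hi.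
have s_oi : s oi = oj by apply: ord_inj; rewrite sadjE // swapnl.
have s_oj : s oj = oi by apply: ord_inj; rewrite sadjE // swapnr.
have oij : oi < oj := ltnSn i.
have w_oij : w oi < w oj.
  move: asc; rewrite /descent (permnE w oi) (permnE w oj) -leqNgt leq_eqVlt.
  by case/orP => // /eqP/ord_inj/perm_inj/(congr1 val) /=; lia.
have ninv_s : ninv (compS w s) = \sum_(k : 'I_n) \sum_(l : 'I_n) ((s k < s l) && (w l < w k)).
  rewrite /ninv (reindex_inj (@perm_inj _ s)); apply: eq_bigr => k _.
  by rewrite (reindex_inj (@perm_inj _ s)); apply: eq_bigr => l _; rewrite !compSE !sadjK.
have pair1 : \sum_(k : 'I_n) \sum_(l : 'I_n) ((k == oj) && (l == oi)) = 1.
  rewrite (bigD1 oj) //= (bigD1 oi) //= !eqxx !big1 // => [k /negPf-> | l /negPf->] //.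
  by rewrite big1.
rewrite ninv_s /ninv -add1n -pair1 -!big_split /=; apply: eq_bigr => k _.
rewrite -big_split /=; apply: eq_bigr => l _.
have [/andP[/eqP-> /eqP->]|not_ji] := boolP ((k == oj) && (l == oi)).
  by rewrite s_oi s_oj oij w_oij ltnNge ltnW.
have [/andP[/eqP-> /eqP->]|not_ij] := boolP ((k == oi) && (l == oj)).
  by rewrite s_oi s_oj oij ltnNge ltnW // ltnNge ltnW.
rewrite add0n !sadjE // swapn_ltn //.
Qed.

Lemma ninv_sadj_descent w i : i.+1 < n -> descent w i ->
  (ninv (compS w (sadj n i))).+1 = ninv w.
Proof.
move=> hi dwi; rewrite -(ninv_sadj (w := compS w (sadj n i)) hi) ?compS_sadjK //.
by rewrite descent_sadj // negbK.
Qed.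

Lemma ninv_word ws : valid_word n ws -> ninv (word_perm n ws) <= size ws.
Proof.
elim/last_ind: ws => [|ws i IH]; first by rewrite ninv1.
rewrite valid_word_rcons word_perm_rcons size_rcons => /andP[/IH le_ws hi].
have [dwi|awi] := boolP (descent (word_perm n ws) i).
  by have := ninv_sadj_descent hi dwi; lia.
by rewrite ninv_sadj.
Qed.

Lemma no_descent_perm1 w : (forall i, i.+1 < n -> ~~ descent w i) -> w = 1%g.
Proof.
move=> asc.
have up i : i.+1 < n -> permn w i < permn w i.+1.
  move=> hi; move: (asc i hi); rewrite /descent -leqNgt leq_eqVlt.
  by case/orP => // /eqP/(permn_inj (ltnW hi) hi); lia.
have bounded k : k < n -> permn w k < n by move=> hk; rewrite (permnE w (Ordinal hk)).
have lo k : k < n -> k <= permn w k.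
  by elim: k => // k IH hk; have := IH (ltnW hk); have := up k hk; lia.
have shift d k : k + d < n -> permn w k + d <= permn w (k + d).
  elim: d => [|d IH] hkd; first by rewrite !addn0.
  by rewrite !addnS; have := IH ltac:(lia); have := up (k + d) ltac:(lia); lia.
apply/permP => x; apply: ord_inj; rewrite perm1 -permnE; apply/eqP.
have := shift (n.-1 - x) x; have := bounded (x + (n.-1 - x)); have := lo x.
have := ltn_ord x; lia.
Qed.

Lemma descent_exists w : w != 1%g -> exists2 i, i.+1 < n & descent w i.
Proof.
move=> w_neq1; have [/hasP[i]|/hasPn no_desc] := boolP (has (descent w) (iota 0 n.-1)).
  by rewrite mem_iota => /andP[_ hi] dwi; exists i => //; lia.
case/eqP: w_neq1; apply: no_descent_perm1 => i hi; apply: no_desc.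
by rewrite mem_iota; lia.
Qed.

Lemma exists_reduced_word w :
  exists ws, [/\ valid_word n ws, word_perm n ws = w & size ws = ninv w].
Proof.
move: {2}(ninv w) (erefl (ninv w)) => k; elim: k w => [|k IH] w hk;
  have [->|/descent_exists[i hi dwi]] := eqVneq w 1%g; try by exists [::]; rewrite ninv1.
  by have := ninv_sadj_descent hi dwi; lia.
have := ninv_sadj_descent hi dwi; rewrite hk => -[/IH[u [vu pu su]]].
exists (rcons u i); rewrite valid_word_rcons word_perm_rcons size_rcons vu hi pu.
by rewrite compS_sadjK su ninv_sadj_descent.
Qed.

Definition reduced ws := valid_word n ws && (size ws == ninv (word_perm n ws)).

Lemma reduced_word_ofE ws w : reduced_word_of ws w <-> reduced ws /\ word_perm n ws = w.
Proof.
rewrite /reduced; split => [[vws <- min_ws]|[/andP[vws /eqP sws] pws]].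
  rewrite vws eqn_leq ninv_word // andbT; split => //.
  by have [ws' [vws' pws' <-]] := exists_reduced_word (word_perm n ws); apply: min_ws.
by split => // ws' vws' pws'; rewrite sws pws -pws'; apply: ninv_word.
Qed.

Lemma reduced_rcons ws i :
  reduced (rcons ws i) = [&& reduced ws, i.+1 < n & ~~ descent (word_perm n ws) i].
Proof.
rewrite /reduced valid_word_rcons word_perm_rcons size_rcons.
have [vws|] := boolP (valid_word n ws) => //=; have [hi|] := boolP (i.+1 < n);
  rewrite ?andbF //=.
have [dwi|awi] := boolP (descent (word_perm n ws) i); last by rewrite andbT ninv_sadj.
by rewrite andbF; have := ninv_sadj_descent hi dwi; have := ninv_word vws; lia.
Qed.

Lemma exists_reduced w : exists2 ws, reduced ws & word_perm n ws = w.
Proof.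
have [ws [vws pws sws]] := exists_reduced_word w.
by exists ws; rewrite // /reduced vws pws sws eqxx.
Qed.

End Permutations.

Section Matsumoto.
Variables (n : nat) (A : Type) (T : nat -> A -> A).
Hypothesis T_comm : forall i j a, i.+1 < n -> j.+1 < n -> (i.+1 < j) || (j.+1 < i) ->
  T i (T j a) = T j (T i a).
Hypothesis T_braid : forall i a, i.+2 < n -> T i (T i.+1 (T i a)) = T i.+1 (T i (T i.+1 a)).

Section Step.
Variable k : nat.
Hypothesis IH : forall ws1 ws2, reduced n ws1 -> reduced n ws2 ->
  word_perm n ws1 = word_perm n ws2 -> size ws1 = k -> forall a, foldr T a ws1 = foldr T a ws2.

(* [w] has descents at [i] and [j]; by induction both words are rewritten to end with a reduced
   word of the longest element of the subgroup generated by [s_i] and [s_j]. *)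
Section TwoDescents.
Variables (w : 'S_n) (u v : seq nat) (i j : nat).
Hypotheses (ru : reduced n u) (rv : reduced n v) (su : size u = k) (sv : size v = k).
Hypotheses (pu : word_perm n u = compS w (sadj n i)) (pv : word_perm n v = compS w (sadj n j)).
Hypotheses (hj : j.+1 < n) (dwi : descent w i) (dwj : descent w j).

Local Ltac descents := move: dwi dwj; rewrite /descent !permn_sadj //; rewrite /swapn; case_eqn.

Lemma matsumoto_far : i.+1 < j -> forall a, foldr T a (rcons u i) = foldr T a (rcons v j).
Proof.
move=> ij a; have hi : i.+1 < n by lia.
have [z rz pz] := exists_reduced (compS (compS w (sadj n i)) (sadj n j)).
have uz : forall b, foldr T b u = foldr T b (rcons z j).
  apply: IH => //; last by rewrite word_perm_rcons pz compS_sadjK.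
  by rewrite reduced_rcons rz hj pz /=; descents.
have vz : forall b, foldr T b v = foldr T b (rcons z i).
  apply: IH => //.
    by rewrite reduced_rcons rz hi pz /=; descents.
  rewrite word_perm_rcons pz pv; apply/permP => y; rewrite !compSE sadjC ?sadjK //; lia.
by rewrite !foldr_rcons uz vz !foldr_rcons T_comm //; lia.
Qed.

Lemma matsumoto_braid : j = i.+1 -> forall a, foldr T a (rcons u i) = foldr T a (rcons v j).
Proof.
move=> ji a; subst j; have hi := ltnW hj.
have [z rz pz] := exists_reduced (compS (compS (compS w (sadj n i)) (sadj n i.+1)) (sadj n i)).
have uz : forall b, foldr T b u = foldr T b (rcons (rcons z i) i.+1).
  apply: IH => //; last by rewrite !word_perm_rcons pz !compS_sadjK.
  by rewrite !reduced_rcons rz hi hj !word_perm_rcons pz /=; descents.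
have vz : forall b, foldr T b v = foldr T b (rcons (rcons z i.+1) i).
  apply: IH => //.
    by rewrite !reduced_rcons rz hi hj !word_perm_rcons pz /=; descents.
  rewrite !word_perm_rcons pz pv; apply/permP => y; rewrite !compSE.
  by rewrite sadj_braid // !sadjK.
by rewrite !foldr_rcons uz vz !foldr_rcons T_braid.
Qed.

End TwoDescents.

Lemma matsumoto_lt u v i j : i < j -> reduced n (rcons u i) -> reduced n (rcons v j) ->
  word_perm n (rcons u i) = word_perm n (rcons v j) -> size u = k ->
  forall a, foldr T a (rcons u i) = foldr T a (rcons v j).
Proof.
move=> ij rui rvj puv su.
have sv : size v = k.
  move: (rui) (rvj) => /andP[_ /eqP s1] /andP[_ /eqP s2].
  by rewrite size_rcons in s2; rewrite puv size_rcons su in s1; lia.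
move: (rui) (rvj); rewrite !reduced_rcons => /and3P[ru hi aui] /and3P[rv hj avj].
set w := word_perm n (rcons u i).
have pu : word_perm n u = compS w (sadj n i) by rewrite /w word_perm_rcons compS_sadjK.
have pv : word_perm n v = compS w (sadj n j) by rewrite /w puv word_perm_rcons compS_sadjK.
have dwi : descent w i by rewrite -[w](compS_sadjK _ i) -pu descent_sadj.
have dwj : descent w j by rewrite -[w](compS_sadjK _ j) -pv descent_sadj.
have [ij1|ji] := ltnP i.+1 j; first exact: matsumoto_far ru rv su sv pu pv hj dwi dwj ij1.
by apply: (matsumoto_braid ru rv su sv pu pv hj dwi); lia.
Qed.

End Step.

Theorem matsumoto ws1 ws2 (w : 'S_n) : reduced_word_of ws1 w -> reduced_word_of ws2 w ->
  forall a, foldr T a ws1 = foldr T a ws2.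
Proof.
move=> /reduced_word_ofE[r1 <-] /reduced_word_ofE[r2 /esym p12].
move: {2}(size ws1) (erefl (size ws1)) => k.
elim: k ws1 ws2 r1 r2 p12 => [|k IH] ws1 ws2 r1 r2 p12 s1 a.
  case: ws1 s1 r1 p12 => // _ _ p12.
  by move: r2 => /andP[_ /eqP]; rewrite -p12 ninv1 => /size0nil->.
have s2 : size ws2 = size ws1.
  by move: r1 r2 => /andP[_ /eqP->] /andP[_ /eqP->]; rewrite p12.
case/lastP: ws1 s1 r1 p12 s2 => [//|u i]; rewrite size_rcons => -[su] r1 p12 s2.
case/lastP: ws2 r2 p12 s2 => [//|v j] r2 p12; rewrite size_rcons su => -[sv].
have [ij|ji|eij] := ltngtP i j.
- exact (matsumoto_lt IH ij r1 r2 p12 su a).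
- exact/esym/(matsumoto_lt IH ji r2 r1 (esym p12) sv a).
subst j; rewrite !foldr_rcons; apply: IH su _ => //.
- by move: r1; rewrite reduced_rcons => /andP[].
- by move: r2; rewrite reduced_rcons => /andP[].
move: p12; rewrite !word_perm_rcons => /(congr1 (fun p => compS p (sadj n i))).
by rewrite !compS_sadjK.
Qed.

End Matsumoto.

Local Open Scope ring_scope.

Section HeckeModule.
Variables (n : nat) (F : fieldType) (V : vectType F) (phi : {rmorphism Ah -> F}).
Variables (T x : nat -> {linear V -> V}).
Hypothesis hact : hecke_action n phi T x.
Local Notation p := (phi pA).
Local Notation q := (phi qA).

Lemma hecke_quadratic i v : (i.+1 < n)%N -> T i (T i v) = (q - p) *: T i v + (p * q) *: v.
Proof.
move=> hi; have := (proj1 hact) i v hi; rewrite linearB linearZ /= => quad.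
rewrite -[T i (T i v)]subr0 -quad; move: (T i v) => Tv; move: (T i Tv) => TTv.
rewrite scalerBr scalerA scalerBl opprD !opprB addrA [TTv + _]addrC subrK.
by rewrite addrCA addrC.
Qed.

Lemma apply_word_reduced ws1 ws2 (w : 'S_n) : reduced_word_of ws1 w -> reduced_word_of ws2 w ->
  forall v, apply_word T ws1 v = apply_word T ws2 v.
Proof.
case: hact => _ [T_comm [T_braid _]].
exact: (matsumoto (T := fun i v => T i v)).
Qed.

Variables (rw : 'S_n -> seq nat) (Yw0 : V) (Y : 'S_n -> V).
Hypothesis hrw : forall w : 'S_n, reduced_word_of (rw w) w.
Hypothesis hY : forall w : 'S_n, Y w = apply_word T (rw (compS w^-1 (w0 n))) Yw0.

Lemma T_Y_descent b i : (i.+1 < n)%N -> descent b i -> T i (Y b) = Y (compS b (sadj n i)).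
Proof.
(* [Y b] is [T_(rw c)] applied to [Yw0], and [i :: rw c] is a reduced word of [s_i c], the
   permutation indexing [Y (b s_i)]. *)
move=> hi dbi; set c := compS b^-1 (w0 n).
have c_si : compS (compS b (sadj n i))^-1 (w0 n) = compS (sadj n i) c.
  by rewrite /c /compS invMg sadjV mulgA.
have ninv_c : (ninv c).+1 = ninv (compS (sadj n i) c).
  have := ninv_mulw0 b^-1; have := ninv_mulw0 (compS b (sadj n i))^-1.
  by rewrite -/c c_si !ninvV; have := ninv_sadj_descent hi dbi; lia.
have red_c : reduced_word_of (i :: rw c) (compS (sadj n i) c).
  have /reduced_word_ofE[/andP[vc /eqP sc] pc] := hrw c.
  by apply/reduced_word_ofE; rewrite /reduced /= hi vc sc pc ninv_c eqxx.
by rewrite [Y (compS _ _)]hY c_si (apply_word_reduced (hrw _) red_c) hY.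
Qed.

Lemma Tbar_Y b i : (i.+1 < n)%N -> T i (Y b) + (p - q) *: Y b =
  if descent b i then Y (compS b (sadj n i)) + (p - q) *: Y b
  else (p * q) *: Y (compS b (sadj n i)).
Proof.
move=> hi; case: ifPn => [dbi|abi]; first by rewrite T_Y_descent.
have dbi' : descent (compS b (sadj n i)) i by rewrite descent_sadj.
rewrite -{1 2}[b](compS_sadjK _ i) -T_Y_descent // hecke_quadratic //.
by rewrite addrAC -scalerDl -opprB addNr scale0r add0r.
Qed.

End HeckeModule.

Section SpanningFamily.
Variables (F : fieldType) (V : vectType F) (I : finType) (Y : I -> V).

Lemma span_enum_sumP v :
  v \in span [seq Y i | i <- enum I] -> exists c : I -> F, v = \sum_i c i *: Y i.
Proof.
rewrite span_def big_map big_enum /= => /memv_sumP[vs vsY ->].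
have /fin_all_exists[c vsE] i : exists k, vs i = k *: Y i by apply/vlineP/vsY.
by exists c; apply: eq_bigr => i _; rewrite vsE.
Qed.

Section DualFamily.
Variables (lam : I -> {scalar V}) (e : F).
Hypothesis lamY : forall i j, lam i (Y j) = if i == j then e else 0.

Lemma dual_family_sum (c : I -> F) i : lam i (\sum_j c j *: Y j) = c i * e.
Proof.
rewrite linear_sum (bigD1 i) //= big1 => [|j ji]; first by rewrite scalarZ lamY eqxx addr0.
by rewrite scalarZ lamY eq_sym (negPf ji) mulr0.
Qed.

Lemma dual_family_eq (v1 v2 : V) : e != 0 ->
  v1 - v2 \in span [seq Y i | i <- enum I] -> (forall i, lam i v1 = lam i v2) -> v1 = v2.
Proof.
move=> e_neq0 /span_enum_sumP[c v12E] lam12; apply/eqP; rewrite -subr_eq0 v12E.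
apply/eqP/big1 => i _; have := dual_family_sum c i.
rewrite -v12E linearB lam12 subrr => /esym/eqP; rewrite mulf_eq0 (negPf e_neq0) orbF.
by move/eqP->; rewrite scale0r.
Qed.

End DualFamily.

End SpanningFamily.

Lemma index_enumE (I : finType) : index_enum I = enum I.
Proof. by rewrite [index_enum _]unlock -enumT. Qed.

Section EndomorphismRing.
Variables (F : fieldType) (V : vectType F) (V_gt0 : (0 < dim V)%N) (phi : {rmorphism Ah -> F}).
(* Composition, not the converse product of [lfun_algType], makes [V] a left module. *)
Local Notation R := (lfun_comp_nzRingType V_gt0).

Lemma lfun_mulE (f g : R) v : (f * g : R) v = f (g v).
Proof. exact: comp_lfunE. Qed.

Lemma lfun_oneE v : (1 : R) v = v.
Proof. exact: id_lfunE. Qed.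

Lemma lfun_expE (f : R) k v : (f ^+ k) v = iter k f v.
Proof. by elim: k => [|k IH]; rewrite ?expr0 ?lfun_oneE // exprS lfun_mulE IH. Qed.

Definition phi_lfun (a : Ah) : R := phi a *: \1%VF.

Lemma phi_lfunE a v : phi_lfun a v = phi a *: v.
Proof. by rewrite /phi_lfun scale_lfunE id_lfunE. Qed.

Fact phi_lfun_is_additive : additive phi_lfun.
Proof. by move=> a b; rewrite /phi_lfun rmorphB scalerBl. Qed.

Fact phi_lfun_is_multiplicative : multiplicative phi_lfun.
Proof.
split; last by rewrite /phi_lfun rmorph1 scale1r.
by move=> a b; apply/lfunP => v; rewrite lfun_mulE !phi_lfunE rmorphM scalerA.
Qed.

HB.instance Definition _ := GRing.isAdditive.Build Ah R phi_lfun phi_lfun_is_additive.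
HB.instance Definition _ :=
  GRing.isMultiplicative.Build Ah R phi_lfun phi_lfun_is_multiplicative.

Lemma phi_lfun_central a (f : R) : phi_lfun a * f = f * phi_lfun a.
Proof. by apply/lfunP => v; rewrite !lfun_mulE !phi_lfunE linearZ. Qed.

Lemma hecke_rel_lfun n (T x : nat -> {linear V -> V}) :
  hecke_action n phi T x ->
  hecke_rel n phi_lfun (fun i => linfun (T i) : R) (fun i => linfun (x i) : R).
Proof.
case=> [T_quad [T_comm [T_braid [x_comm [Tx_comm [Tx_l Tx_r]]]]]].
do ![split] => *; apply/lfunP => v;
  rewrite !(lfun_mulE, add_lfunE, opp_lfunE, phi_lfunE, lfunE) /= -?scalerBl; auto.
Qed.

Lemma Tbar_word_rcons (T : nat -> {linear V -> V}) ws i v :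
  Tbar_word phi_lfun (fun j => linfun (T j) : R) (rcons ws i) v =
  Tbar_word phi_lfun (fun j => linfun (T j) : R) ws (T i v + (phi pA - phi qA) *: v).
Proof.
by rewrite /Tbar_word big_rcons lfun_mulE !add_lfunE opp_lfunE !phi_lfunE lfunE /= scalerBl.
Qed.

Lemma peval_lfun n (x : nat -> {linear V -> V}) (G : {mpoly Ah[n]}) v :
  peval phi_lfun (fun i => linfun (x i) : R) G v = poly_act phi x G v.
Proof.
rewrite /peval sum_lfunE; apply: eq_bigr => m _; rewrite lfun_mulE phi_lfunE.
congr (_ *: _); rewrite /xmon_act index_enumE.
elim: (enum 'I_n) => [|i s IH]; first by rewrite big_nil lfun_oneE.
rewrite big_cons lfun_mulE IH lfun_expE /=.
by elim: (m i) => //= k ->; rewrite lfunE.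
Qed.

End EndomorphismRing.

Section Evaluation.
Variables (F : fieldType) (V : vectType F) (phi : {rmorphism Ah -> F}) (n : nat).
Variables (x : nat -> {linear V -> V}) (ev : {scalar V}) (t : nat -> F).
Hypothesis ev_x : forall i v, (i < n)%N -> ev (x i v) = t i * ev v.

Lemma ev_poly_act (G : {mpoly Ah[n]}) v :
  ev (poly_act phi x G v) = (map_mpoly phi G).@[fun i : 'I_n => t i] * ev v.
Proof.
have -> : (map_mpoly phi G).@[fun i : 'I_n => t i] =
    \sum_(m <- msupp G) phi G@_m * \prod_(i < n) t i ^+ m i.
  rewrite [in LHS](mpolyE G) [map_mpoly _ _]raddf_sum raddf_sum; apply: eq_bigr => m _.
  by rewrite /= map_mpolyZ map_mpolyX mevalZ mevalX.
rewrite /poly_act linear_sum mulr_suml; apply: eq_bigr => m _.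
rewrite linearZ /= -mulrA; congr (_ * _); rewrite /xmon_act index_enumE.
elim: (enum 'I_n) => [|i s IH] /=; first by rewrite big_nil mul1r.
rewrite big_cons -mulrA -IH; move: (foldr _ v s) => u.
by elim: (m i) => [|k IHk] /=; rewrite ?expr0 ?mul1r // ev_x // IHk exprS mulrA.
Qed.

End Evaluation.

Section SchubertClasses.
Variables (n : nat) (rw : 'S_n -> seq nat) (F : fieldType) (phi : {rmorphism Ah -> F}).
Variables (t : nat -> F) (V : vectType F) (V_gt0 : (0 < dim V)%N).
Variables (T x : nat -> {linear V -> V}) (Yw0 : V) (Y : 'S_n -> V) (ev : {scalar V}).
Hypothesis hrw : forall w : 'S_n, reduced_word_of (rw w) w.
Hypothesis hact : hecke_action n phi T x.
Hypothesis hY : forall w : 'S_n, Y w = apply_word T (rw (compS w^-1 (w0 n))) Yw0.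
Hypothesis hev1 : forall w : 'S_n, (ev (Y w) != 0) = (w == 1%g).

Local Notation R := (lfun_comp_nzRingType V_gt0).
Local Notation Tbar := (Tbar_word (phi_lfun V_gt0 phi) (fun i => linfun (T i) : R)).

Lemma ev_Tbar_Y ws b : reduced n ws ->
  ev (Tbar ws (Y b)) = if word_perm n ws == b then ev (Y 1%g) else 0.
Proof.
elim/last_ind: ws b => [b _|ws i IH b]; last rewrite reduced_rcons => /and3P[rws hi aws].
  rewrite /Tbar_word big_nil lfun_oneE /=; have [<-//|b_neq1] := eqVneq 1%g b.
  by apply/eqP; rewrite -[_ == 0]negbK hev1 eq_sym (negPf b_neq1).
rewrite Tbar_word_rcons (Tbar_Y hact hrw hY) // word_perm_rcons compS_sadj_eq.
case: ifPn => [dbi|abi].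
  rewrite !linearD !linearZ /= !IH //.
  have -> : (word_perm n ws == b) = false by apply: contraNF aws => /eqP->.
  by rewrite mulr0 addr0.
rewrite !linearZ /= IH //.
have -> : (word_perm n ws == compS b (sadj n i)) = false.
  by apply: contraNF aws => /eqP->; rewrite descent_sadj.
by rewrite mulr0.
Qed.

Definition schubert_dual (w : 'S_n) : {scalar V} := ev \o Tbar (rw w).

Lemma schubert_dualY w b : schubert_dual w (Y b) = if w == b then ev (Y 1%g) else 0.
Proof. by have /reduced_word_ofE[rw_red {2}<-] := hrw w; apply: ev_Tbar_Y. Qed.

Hypothesis ev_x : forall i v, (i < n)%N -> ev (x i v) = t i * ev v.

Lemma schubert_dual_poly_act f P u w : hecke_identity rw f P w ->
  schubert_dual w (poly_act phi x f (Y u)) =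
    (map_mpoly phi (P u w)).@[fun i : 'I_n => t i] * ev (Y 1%g).
Proof.
move=> hPw; have /lfunP/(_ (Y u)) := hPw R (phi_lfun V_gt0 phi) _ _
  (phi_lfun_central phi) (hecke_rel_lfun V_gt0 hact).
rewrite lfun_mulE peval_lfun sum_lfunE /= => hPwu.
have dualE u' : ev (Tbar (rw u') (Y u)) = if u' == u then ev (Y 1%g) else 0.
  exact: schubert_dualY.
rewrite /schubert_dual /= hPwu linear_sum (bigD1 u) //= big1 => [|u' u'_neq];
  rewrite lfun_mulE peval_lfun (ev_poly_act phi ev_x) dualE ?eqxx ?addr0 //.
by rewrite (negPf u'_neq) mulr0.
Qed.

End SchubertClasses.

Unset Implicit Arguments.

Theorem theorem3p6
  (n : nat) (rw : 'S_n -> seq nat)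
  (hrw : forall w : 'S_n, reduced_word_of (rw w) w)
  (F : fieldType) (phi : {rmorphism Ah -> F}) (t : nat -> F)
  (V : vectType F) (T x : nat -> {linear V -> V})
  (hact : hecke_action n phi T x)
  (Yw0 : V)
  (Y : 'S_n -> V)
  (hY : forall w : 'S_n, Y w = apply_word T (rw (compS w^-1 (w0 n))) Yw0)
  (hbasis : basis_of fullv [seq Y w | w <- enum 'S_n])
  (ev : {scalar V})
  (hev1 : forall w : 'S_n, (ev (Y w) != 0) = (w == 1%g))
  (hevx : forall (i : nat) (w : 'S_n), (i < n)%N -> ev (x i (Y w)) = t i * ev (Y w))
  (f : {mpoly Ah[n]}) (P : 'S_n -> 'S_n -> {mpoly Ah[n]})
  (hP : forall w : 'S_n, hecke_identity rw f P w) :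
  forall u : 'S_n,
    poly_act phi x f (Y u) =
      \sum_(w : 'S_n) (map_mpoly phi (P u w)).@[fun i : 'I_n => t i] *: Y w.
Proof.
move=> u.
have spanY v : v \in span [seq Y w | w <- enum 'S_n].
  by have /andP[/eqP-> _] := hbasis; apply: memvf.
have V_gt0 : (0 < dim V)%N.
  rewrite -dimvf (vector.size_basis (X := in_tuple _) hbasis) size_map -cardE.
  by apply/card_gt0P; exists 1%g.
have ev_x i v : (i < n)%N -> ev (x i v) = t i * ev v.
  move=> hi; have [c ->] := span_enum_sumP (spanY v); rewrite !linear_sum mulr_sumr.
  by apply: eq_bigr => w _; rewrite !linearZ /= hevx // mulrCA.
have dualY := schubert_dualY V_gt0 hrw hact hY hev1.
apply: (dual_family_eq dualY) => [||w]; rewrite ?hev1 ?spanY //.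
by rewrite (dual_family_sum dualY) (schubert_dual_poly_act V_gt0 hrw hact hY hev1 ev_x u (hP w)).
Qed.
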